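(* Let $A$ be an $m\times m$ coloring matrix and $B=(b_{pq})$ an $m'\times m$ matrix with entries in $\{0,1\}$. Let $A'$ be the $(m+m')\times(m+m')$ block matrix $$A'=\left[\begin{array}{c|c}A&0\\\hline B&0\end{array}\right].$$ Then for every $1\le i\le m$, $F_{A'}^{(i)}(x)=F_A^{(i)}(x)$, and for every $m+1\le i\le m+m'$, $$F_{A'}^{(i)}(x)=\frac{x}{1-\sum_{j=1}^m b_{i-m,j}F_A^{(j)}(x)}.$$
   Context: A plane tree is an unlabeled rooted tree in which the children of every vertex are linearly ordered. A coloring matrix is a square matrix $A=(a_{ij})$ with entries in $\{0,1\}$. An $A$-coloring of a plane tree assigns to each vertex a color (an index of a row of $A$) such that whenever a vertex of color $j$ is a child of a vertex of color $i$, $a_{ij}=1$. Let $t_A^{(i)}(n)$ be the number of pairs (plane tree with $n$ vertices, $A$-coloring of it) in which the root has color $i$, and $F_A^{(i)}(x)=\sum_{n\ge1}t_A^{(i)}(n)x^n$ (formal power series). *)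

From HB Require Import structures.
From mathcomp Require Import all_boot all_order all_algebra.
Set Implicit Arguments. Unset Strict Implicit. Unset Printing Implicit Defensive.
Import GRing.Theory.
Local Open Scope ring_scope.

(** A pair (plane tree, coloring of it) is the
    same thing as a plane tree whose vertices carry a color: [LNode c ts] is a
    vertex of color [c] whose ordered list of children subtrees is [ts]. *)
Inductive ltree (T : Type) := LNode of T & seq (ltree T).

Definition lroot (T : Type) (t : ltree T) : T := let: LNode c _ := t in c.

Fixpoint tsize (T : Type) (t : ltree T) : nat :=
  let: LNode _ ts := t in (sumn (map (@tsize T) ts)).+1.

Fixpoint Avalid (k : nat) (A : 'M[nat]_k) (t : ltree 'I_k) : bool :=
  let: LNode c ts := t in
  all (fun s => (A c (lroot s) == 1%N) && Avalid A s) ts.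

(** Enumeration (with fuel d) of all colored plane trees / plane forests with
    exactly n vertices and colors in 'I_k. Each object is listed exactly once. *)
Fixpoint gen (k d : nat) :
  (nat -> seq (ltree 'I_k)) * (nat -> seq (seq (ltree 'I_k))) :=
  match d with
  | 0 => (fun _ => [::], fun _ => [::])
  | d'.+1 =>
    let: (Tr, Fo) := gen k d' in
    (fun n => if n is n'.+1 then
                [seq LNode c f | c <- enum 'I_k, f <- Fo n'] else [::],
     fun n => if n is 0 then [:: [::]] else
       flatten [seq [seq t :: f | t <- Tr j, f <- Fo (n - j)%N]
               | j <- iota 1 n])
  end.

(** all colored plane trees with n vertices (fuel 2n+1 suffices) *)
Definition trees_of_size (k n : nat) : seq (ltree 'I_k) :=
  (gen k (2 * n).+1).1 n.

Definition tcount (k : nat) (A : 'M[nat]_k) (i : 'I_k) (n : nat) : nat :=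
  count (fun t => (lroot t == i) && Avalid A t) (trees_of_size k n).

Definition fps := nat -> int.
Definition fps_mul (f g : fps) : fps :=
  fun n => \sum_(j < n.+1) f j * g (n - j)%N.
Definition fps_X : fps := fun n => (n == 1%N)%:R.
Definition fps_one : fps := fun n => (n == 0%N)%:R.

(** F_A^{(i)}(x) = sum_{n>=1} t_A^{(i)}(n) x^n  (t_A^{(i)}(0) = 0). *)
Definition FA (k : nat) (A : 'M[nat]_k) (i : 'I_k) : fps :=
  fun n => (tcount A i n)%:R.

Definition is01 (p q : nat) (M : 'M[nat]_(p, q)) : Prop :=
  forall a b, M a b = 0%N \/ M a b = 1%N.

From HB Require Import structures.
From mathcomp Require Import all_boot all_order all_algebra.
From mathcomp Require Import zify.
From Stdlib Require Import FunctionalExtensionality.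
Set Implicit Arguments. Unset Strict Implicit. Unset Printing Implicit Defensive.
Import GRing.Theory.

(* A tree colored by A' whose root has a color of A uses only colors of A,
   because the upper right block of A' vanishes; hence the two counts agree.
   A vertex of color m + p can only have children of colors j <= m with
   b_pj = 1, and these children root A-colored trees.  So the series f of the
   forests that may hang below such a vertex satisfies f = 1 + f g with
   g = sum_j b_pj F_A^(j), while the tree series is x f; therefore
   F_A'^(m+p) (1 - g) = x f (1 - g) = x. *)

Section PowerSeries.
Local Open Scope ring_scope.

Lemma fps_mulC (f g : fps) : fps_mul f g = fps_mul g f.
Proof.
apply: functional_extensionality => n; rewrite /fps_mul (reindex_inj rev_ord_inj).
by apply: eq_bigr => j _; rewrite /= subSS subKn 1?mulrC // -ltnS.
Qed.

Lemma fps_mul_one_sub_eq_X (t f g : fps) :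
  t 0%N = 0 -> (forall n, t n.+1 = f n) ->
  f 0%N = 1 -> (forall n, f n.+1 = fps_mul f g n.+1) -> g 0%N = 0 ->
  fps_mul t (fun n => fps_one n - g n) = fps_X.
Proof.
move=> t0 tS f0 fS g0; apply: functional_extensionality => n.
rewrite /fps_mul /fps_X /fps_one.
under eq_bigr => j _ do rewrite mulrBr.
rewrite sumrB.
have -> : \sum_(j < n.+1) t j * (n - j == 0)%N%:R = t n.
  rewrite big_ord_recr /= subnn mulr1 big1 ?add0r // => j _.
  by rewrite subn_eq0 leqNgt ltn_ord mulr0.
case: n => [|n]; first by rewrite big_ord1 t0 mul0r subr0.
rewrite big_ord_recl t0 mul0r add0r tS.
under eq_bigr => j _ do rewrite lift0 subSS tS.
case: n => [|n]; first by rewrite big_ord1 f0 g0 mulr0 subr0.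
by rewrite fS subrr.
Qed.

End PowerSeries.

Lemma count_allpairs_and (S T U : Type) (f : S -> T -> U)
    (a : pred S) (b : pred T) (P : pred U) s t :
  (forall x y, P (f x y) = a x && b y) ->
  count P [seq f x y | x <- s, y <- t] = count a s * count b t.
Proof.
move=> Pf; elim: s => //= x s IH; rewrite count_cat count_map IH mulnDl.
congr (_ + _); rewrite (@eq_count _ _ (fun y => a x && b y)) => [|y]; last exact: Pf.
by case: (a x); rewrite ?mul1n ?mul0n //; apply: count_pred0.
Qed.

Lemma count_and_fibers (T : Type) (I : finType) (h : T -> I)
    (P : pred I) (a : pred T) s :
  count (fun x => P (h x) && a x) s =
  \sum_(i | P i) count (fun x => (h x == i) && a x) s.
Proof.
elim: s => [|x s IH] /=; first by rewrite big1.
rewrite big_split /= -IH; congr (_ + _).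
have [Phx | nPhx] /= := boolP (P (h x)).
  rewrite (bigD1 (h x)) //= eqxx big1 ?addn0 // => i /andP[_ /negbTE].
  by rewrite eq_sym => ->.
by rewrite big1 // => i Pi; case: eqP => // hxi; rewrite hxi Pi in nPhx.
Qed.

Section Enumeration.
Variable k : nat.

Lemma gen_trees0 d : (gen k d).1 0 = [::].
Proof. by case: d => //= d; case: (gen k d). Qed.

Lemma gen_treesS d n :
  (gen k d.+1).1 n.+1 = [seq LNode c f | c <- enum 'I_k, f <- (gen k d).2 n].
Proof. by rewrite /=; case: (gen k d). Qed.

Lemma gen_forests0 d : (gen k d.+1).2 0 = [:: [::]].
Proof. by rewrite /=; case: (gen k d). Qed.

Lemma gen_forestsS d n : (gen k d.+1).2 n.+1 =
  flatten [seq [seq t :: f | t <- (gen k d).1 j, f <- (gen k d).2 (n.+1 - j)]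
          | j <- iota 1 n.+1].
Proof. by rewrite /=; case: (gen k d). Qed.

Lemma gen_fuel_indep d d' n : 2 * n <= d -> 2 * n <= d' ->
  (gen k d).1 n = (gen k d').1 n /\
  ((2 * n).+1 <= d -> (2 * n).+1 <= d' -> (gen k d).2 n = (gen k d').2 n).
Proof.
elim: d d' n => [|d IH] [|d'] [|n] le_nd le_nd';
  rewrite ?gen_trees0 ?gen_forests0 ?gen_treesS ?gen_forestsS; try lia; try by [].
split=> [|lt_nd lt_nd']; first by rewrite (IH d' n _ _).2 //; lia.
congr (flatten _); apply/eq_in_map => j; rewrite mem_iota => /andP[j_gt0 j_le].
by rewrite (IH d' j _ _).1 ?(IH d' (n.+1 - j) _ _).2 //; lia.
Qed.

Definition forests n := (gen k (2 * n).+1).2 n.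

Lemma gen_trees_fuel d n : 2 * n <= d -> (gen k d).1 n = trees_of_size k n.
Proof. by move=> le_nd; rewrite (gen_fuel_indep le_nd (leqnSn _)).1. Qed.

Lemma gen_forests_fuel d n : (2 * n).+1 <= d -> (gen k d).2 n = forests n.
Proof. by move=> lt_nd; rewrite (gen_fuel_indep (ltnW lt_nd) (leqnSn _)).2. Qed.

Lemma trees_of_size0 : trees_of_size k 0 = [::].
Proof. exact: gen_trees0. Qed.

Lemma trees_of_sizeS n :
  trees_of_size k n.+1 = [seq LNode c f | c <- enum 'I_k, f <- forests n].
Proof. by rewrite /trees_of_size gen_treesS gen_forests_fuel //; lia. Qed.

Lemma forests0 : forests 0 = [:: [::]].
Proof. exact: gen_forests0. Qed.

Lemma forestsS n : forests n.+1 =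
  flatten [seq [seq t :: f | t <- trees_of_size k j, f <- forests (n.+1 - j)]
          | j <- iota 1 n.+1].
Proof.
rewrite /forests gen_forestsS; congr (flatten _); apply/eq_in_map => j.
rewrite mem_iota => /andP[j_gt0 j_le].
by rewrite gen_trees_fuel ?gen_forests_fuel //; lia.
Qed.

End Enumeration.

Section ValidCounts.
Variables (k : nat) (A : 'M[nat]_k).

Definition Avalid_children (c : 'I_k) (ts : seq (ltree 'I_k)) : bool :=
  all (fun s => (A c (lroot s) == 1) && Avalid A s) ts.

Definition forest_count (c : 'I_k) (n : nat) : nat :=
  count (Avalid_children c) (forests k n).

Lemma tcount0 c : tcount A c 0 = 0.
Proof. by rewrite /tcount trees_of_size0. Qed.

Lemma tcountS c n : tcount A c n.+1 = forest_count c n.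
Proof.
rewrite /tcount trees_of_sizeS.
rewrite (@count_allpairs_and _ _ _ _ (pred1 c) (Avalid_children c)) => [|c' f].
  by rewrite count_uniq_mem ?enum_uniq // mem_enum mul1n.
by rewrite /=; case: eqP => [->|].
Qed.

Lemma forest_count0 c : forest_count c 0 = 1.
Proof. by rewrite /forest_count forests0. Qed.

Lemma forest_countS c n : forest_count c n.+1 =
  \sum_(j < n.+2) (\sum_(c' | A c c' == 1) tcount A c' j) * forest_count c (n.+1 - j).
Proof.
rewrite big_ord_recl big1 ?mul0n ?add0n => [|c' _]; last exact: tcount0.
rewrite /forest_count forestsS count_flatten sumnE !big_map.
rewrite -[iota 1 n.+1]/(index_iota 1 n.+2) big_add1 big_mkord.
apply: eq_bigr => j _; rewrite lift0.
rewrite (count_allpairs_and (a := fun t => (A c (lroot t) == 1) && Avalid A t)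
                            (b := Avalid_children c)) //.
by rewrite (count_and_fibers (@lroot _) (fun c' => A c c' == 1)).
Qed.

End ValidCounts.

Section BlockMatrix.
Variables (m m' : nat) (A : 'M[nat]_m) (B : 'M[nat]_(m', m)).
Local Notation A' := (block_mx A 0 B 0).

Lemma sum_block_row_lshift (F : 'I_(m + m') -> nat) c :
  \sum_(c' | A' (lshift m' c) c' == 1) F c' =
  \sum_(c' < m | A c c' == 1) F (lshift m' c').
Proof.
rewrite big_split_ord /=; under eq_bigl => i do rewrite block_mxEul.
by rewrite [X in _ + X]big1 ?addn0 // => i; rewrite block_mxEur mxE.
Qed.

Lemma sum_block_row_rshift (F : 'I_(m + m') -> nat) p :
  \sum_(c' | A' (rshift m p) c' == 1) F c' =
  \sum_(c' < m | B p c' == 1) F (lshift m' c').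
Proof.
rewrite big_split_ord /=; under eq_bigl => i do rewrite block_mxEdl.
by rewrite [X in _ + X]big1 ?addn0 // => i; rewrite block_mxEdr mxE.
Qed.

Lemma forest_count_block_lshift c n :
  forest_count A' (lshift m' c) n = forest_count A c n.
Proof.
elim/ltn_ind: n c => -[|n] IH c; first by rewrite !forest_count0.
rewrite !forest_countS; apply: eq_bigr => -[[|j] lt_j] _ /=.
  by rewrite !big1 // => c' _; rewrite tcount0.
rewrite sum_block_row_lshift IH; last by rewrite subSS ltnS leq_subr.
by congr (_ * _); apply: eq_bigr => c' _; rewrite !tcountS IH.
Qed.

Lemma tcount_block_lshift c n : tcount A' (lshift m' c) n = tcount A c n.
Proof. by case: n => [|n]; rewrite ?tcount0 // !tcountS forest_count_block_lshift. Qed.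

Lemma block_rshift_weight p j : is01 B ->
  ((\sum_(c' | A' (rshift m p) c' == 1%N) tcount A' c' j)%:R =
   \sum_(c < m) (B p c)%:R * FA A c j :> int)%R.
Proof.
move=> B01; rewrite sum_block_row_rshift big_mkcond natr_sum /=.
apply: eq_bigr => c _; rewrite tcount_block_lshift /FA.
by case: (B01 p c) => ->; rewrite ?mul0r ?mul1r.
Qed.

End BlockMatrix.

Local Open Scope ring_scope.

Theorem theorem24 (m m' : nat) (A : 'M[nat]_m) (B : 'M[nat]_(m', m)) :
  is01 A -> is01 B ->
  (forall i : 'I_m, FA (block_mx A 0 B 0) (lshift m' i) = FA A i) /\
  (forall p : 'I_m',
     fps_mul (FA (block_mx A 0 B 0) (rshift m p))
             (fun n => fps_one n - \sum_(j < m) (B p j)%:R * FA A j n)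
     = fps_X).
Proof.
move=> _ B01; split=> [i | p].
  by apply: functional_extensionality => n; rewrite /FA tcount_block_lshift.
pose f n : int := (forest_count (block_mx A 0 B 0) (rshift m p) n)%:R.
apply: (@fps_mul_one_sub_eq_X _ f) => [|n||n|].
- by rewrite /FA tcount0.
- by rewrite /FA tcountS.
- by rewrite /f forest_count0.
- rewrite fps_mulC /f forest_countS natr_sum; apply: eq_bigr => j _.
  by rewrite natrM block_rshift_weight.
- by rewrite big1 // => c _; rewrite /FA tcount0 mulr0.
Qed.
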